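(* Under the standing setup in the context, there are constants $K\ge1$, $C\ge0$ (depending only on $b,c,L,f$) such that \[\rho_\phi([x],[y])\le K\rho(x,y)+C\] for all $x,y\in S$ with $\rho(x,y)\ge f$.
   Context: A semi-metric on a set $Z$ is a function $d:Z\times Z\to[0,\infty)$ with $d(x,y)=0$ iff $x=y$ and $d(x,y)=d(y,x)$. For $b\ge1$, $c\ge0$, a $(b,c)$-metric is a semi-metric with $d(x,z)\le b(d(x,y)+d(y,z))+c$ for all $x,y,z$. Standing setup. $X$ is a topological space (in the paper an $n$-manifold) carrying a $(b,c)$-metric $\rho$. A collapsing set consists of: a subset $S\subseteq X$; a family $\mathcal F$ of pairwise disjoint nonempty subsets of $S$ (''fibers'') whose union is $S$; and a subset $T\subseteq S$ meeting each fiber in exactly one point. The fibering is bounded: $f:=\sup_{F\in\mathcal F}\sup_{u,v\in F}\rho(u,v)<\infty$ (''length of the longest fiber''). For $a,a'\in T$, the length of a continuous path $\gamma:[0,1]\to T$ is $\ell(\gamma)=\sup\sum_{i=1}^k\rho(\gamma(t_{i-1}),\gamma(t_i))$ over partitions $0=t_0<\dots<t_k=1$, and $\rho_p(a,a')$ is the infimum of $\ell(\gamma)$ over continuous paths in $T$ from $a$ to $a'$. $T$ is a Lipschitz curve: there is $L\ge1$ with $\rho_p(a,a')\le L\,\rho(a,a')$ for all $a,a'\in T$. The collapsing relation is $x\sim y$ iff $x=y$ or $x,y$ lie in a common fiber; $X^*=X/\!\sim$, $\phi(x)=[x]$. For $x\in X$ let $r_x=\inf_{s\in S}\rho(x,s)$;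 assume this infimum is attained and fix $x_S\in S$ with $\rho(x,x_S)=r_x$, taking $x_S=x$ when $x\in S$. Let $x'$ denote the unique point of $T$ in the fiber containing $x_S$. The collapsed metric is $\rho_\phi([x],[y])=\rho(x,y)$ if $x,y\notin S$ and $\rho(x,y)\le r_x+r_y$, and $\rho_\phi([x],[y])=\rho_p(x',y')+r_x+r_y$ otherwise. *)

From HB Require Import structures.
From mathcomp Require Import all_boot all_order all_algebra.
From mathcomp Require Import all_classical all_reals all_analysis.
Set Implicit Arguments. Unset Strict Implicit. Unset Printing Implicit Defensive.
Import Order.TTheory GRing.Theory Num.Theory.
Local Open Scope classical_set_scope.
Local Open Scope ring_scope.

Section Defs.
Variables (R : realType) (X : topologicalType) (rho : X -> X -> R).

Definition semi_metric : Prop :=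
  (forall x y, 0 <= rho x y) /\ (forall x y, rho x y = 0 <-> x = y) /\
  (forall x y, rho x y = rho y x).

Definition bc_metric (b c : R) : Prop :=
  semi_metric /\ forall x y z, rho x z <= b * (rho x y + rho y z) + c.

Definition collapsing_set (S : set X) (Fam : set (set X)) (T : set X) : Prop :=
  [/\ (forall F, Fam F -> F !=set0 /\ F `<=` S),
      (forall F G, Fam F -> Fam G -> F `&` G !=set0 -> F = G),
      (forall s, S s -> exists F, Fam F /\ F s),
      T `<=` S &
      (forall F, Fam F -> exists! a, F a /\ T a)].

Definition fiber_dists (Fam : set (set X)) : set R :=
  [set d | exists F u v, [/\ Fam F, F u, F v & d = rho u v]].

Definition bounded_fibering (Fam : set (set X)) (f : R) : Prop :=
  has_ubound (fiber_dists Fam) /\ f = sup (fiber_dists Fam).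

Definition partition01 (t : nat -> R) (k : nat) : Prop :=
  [/\ t 0%N = 0, t k = 1 & forall i, (i < k)%N -> t i < t i.+1].

Definition path_in (T : set X) (g : R -> X) (a a' : X) : Prop :=
  [/\ {within `[0, 1], continuous g},
      (forall t, 0 <= t <= 1 -> T (g t)), g 0 = a & g 1 = a'].

Definition path_length (g : R -> X) : \bar R :=
  ereal_sup [set ((\sum_(0 <= i < tk.2) rho (g (tk.1 i)) (g (tk.1 i.+1)))%:E)%E |
             tk in [set tk : (nat -> R) * nat | partition01 tk.1 tk.2]].

Definition rho_p (T : set X) (a a' : X) : \bar R :=
  ereal_inf [set path_length g | g in [set g | path_in T g a a']].

Definition lipschitz_curve (T : set X) (L : R) : Prop :=
  1 <= L /\ forall a a', T a -> T a' -> (rho_p T a a' <= (L * rho a a')%:E)%E.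

Definition rdist (S : set X) (x : X) : R := inf [set rho x s | s in S].

(* xS : the chosen nearest point of S (attaining r_x, = x on S);
   xp x : the unique point of T in the fiber containing xS x *)
Definition nearest_choice (S : set X) (xS : X -> X) : Prop :=
  forall x, [/\ S (xS x), rho x (xS x) = rdist S x & (S x -> xS x = x)].

Definition T_point_choice (Fam : set (set X)) (T : set X) (xS xp : X -> X) : Prop :=
  forall x, exists F, [/\ Fam F, F (xS x), F (xp x) & T (xp x)].

(* collapsed metric rho_phi([x],[y]) computed on representatives *)
Definition rho_phi (S : set X) (T : set X) (xp : X -> X) (x y : X) : \bar R :=
  if `[< ~ S x /\ ~ S y /\ rho x y <= rdist S x + rdist S y >]
  then (rho x y)%:E
  else (rho_p T (xp x) (xp y) + (rdist S x + rdist S y)%:E)%E.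

End Defs.

From HB Require Import structures.
From mathcomp Require Import all_boot all_order all_algebra.
From mathcomp Require Import all_classical all_reals all_analysis.
From mathcomp Require Import ring lra.
Set Implicit Arguments. Unset Strict Implicit. Unset Printing Implicit Defensive.
Import Order.TTheory GRing.Theory Num.Theory.
Local Open Scope classical_set_scope.
Local Open Scope ring_scope.

(** For x, y in S both distances r_x, r_y vanish, so rho_phi([x],[y]) is
    rho_p(x', y') <= L rho(x', y').  Each of x', y' lies in the fiber of x, y
    respectively, hence within distance f <= rho(x, y) of it, and two uses of
    the (b,c)-triangle inequality bound rho(x', y') linearly in rho(x, y). *)

Section CollapsedMetricOnS.
Variables (R : realType) (X : topologicalType) (rho : X -> X -> R).

Lemma rdist_eq0 (S : set X) z :
  semi_metric rho -> S z -> rdist rho S z = 0.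
Proof.
move=> [rho_ge0 [rho_eq0 _]] Sz; apply/eqP; rewrite eq_le; apply/andP; split.
- apply: ge_inf; first by exists 0 => _ [s _ <-].
  by exists z => //; apply/rho_eq0.
- apply: lb_le_inf; first by exists (rho z z), z.
  by move=> _ [s _ <-].
Qed.

Lemma fiber_dist_le (Fam : set (set X)) (f : R) F u v :
  bounded_fibering rho Fam f -> Fam F -> F u -> F v -> rho u v <= f.
Proof.
move=> [fub ->] FF Fu Fv; apply: (ub_le_sup fub).
by exists F, u, v.
Qed.

Lemma dist_T_point_le (S : set X) (Fam : set (set X)) (T : set X) xS xp f z :
  bounded_fibering rho Fam f -> nearest_choice rho S xS ->
  T_point_choice Fam T xS xp -> S z -> rho z (xp z) <= f.
Proof.
move=> bf nc tp Sz; have [_ _ /(_ Sz) xSz] := nc z.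
have [F [FF Fz Fp _]] := tp z; rewrite xSz in Fz.
exact: fiber_dist_le bf FF Fz Fp.
Qed.

Lemma rho_phi_in_S (S T : set X) xp x y :
  semi_metric rho -> S x -> S y -> rho_phi rho S T xp x y = rho_p rho T (xp x) (xp y).
Proof.
move=> sm Sx Sy; rewrite /rho_phi asboolF; last by case.
by rewrite (rdist_eq0 sm Sx) (rdist_eq0 sm Sy) addr0 adde0.
Qed.

Lemma bc_metric_perturb_le (b c : R) x y x' y' :
  0 <= b -> bc_metric rho b c ->
  rho x' x <= rho x y -> rho y y' <= rho x y ->
  rho x' y' <= (2 * b ^+ 2 + b) * rho x y + (b * c + c).
Proof.
move=> b0 [_ tri] hx hy.
have hxy' : rho x y' <= b * (2 * rho x y) + c.
  apply: le_trans (tri x y y') _; rewrite lerD2r ler_wpM2l //; lra.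
apply: le_trans (tri x' x y') _.
have : b * (rho x' x + rho x y') <= b * (rho x y + (b * (2 * rho x y) + c)).
  by apply: ler_wpM2l => //; apply: lerD.
set d := rho x y; move=> h; apply: le_trans (lerD h (lexx c)) _.
by rewrite le_eqVlt; apply/orP; left; apply/eqP; ring.
Qed.

End CollapsedMetricOnS.

Theorem lemma2p3 (R : realType) (b c L f : R) :
  1 <= b -> 0 <= c -> 1 <= L ->
  exists K C : R, [/\ 1 <= K, 0 <= C &
    forall (X : topologicalType) (rho : X -> X -> R) (S : set X)
           (Fam : set (set X)) (T : set X) (xS xp : X -> X),
      bc_metric rho b c ->
      collapsing_set S Fam T ->
      bounded_fibering rho Fam f ->
      lipschitz_curve rho T L ->
      nearest_choice rho S xS ->
      T_point_choice Fam T xS xp ->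
      forall x y, S x -> S y -> f <= rho x y ->
        (rho_phi rho S T xp x y <= (K * rho x y + C)%:E)%E].
Proof.
move=> b1 c0 L1.
exists (L * (2 * b ^+ 2 + b)), (L * (b * c + c)); split.
- by rewrite -[1]mulr1 ler_pM //; nra.
- by apply: mulr_ge0; nra.
move=> X rho S Fam T xS xp bcm _ bf [_ lip] nc tp x y Sx Sy fxy.
have [[_ [_ rho_sym]] _] := bcm.
have Tp z : T (xp z) by have [F [_ _ _ ?]] := tp z.
have near z : S z -> rho z (xp z) <= rho x y.
  by move=> Sz; apply: le_trans fxy; apply: dist_T_point_le bf nc tp Sz.
rewrite rho_phi_in_S //; last by case: bcm.
apply: le_trans (lip _ _ (Tp x) (Tp y)) _; rewrite lee_fin -mulrA -mulrDr.
apply: ler_wpM2l; first lra.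
by apply: bc_metric_perturb_le bcm _ _; [lra | rewrite rho_sym; apply: near | apply: near].
Qed.
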